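(* For all monitors $m,n$: $m\simeq_\omega n$ if and only if, for every closed substitution $\sigma$, the set $$\mathcal{S}_{m,n,\sigma}=\big(L_a(\sigma(m))\setminus L_a(\sigma(n))\big)\cup\big(L_r(\sigma(m))\setminus L_r(\sigma(n))\big)\cup\big(L_a(\sigma(n))\setminus L_a(\sigma(m))\big)\cup\big(L_r(\sigma(n))\setminus L_r(\sigma(m))\big)$$ is finite.
   Context: Monitors: terms $m,n ::= v \mid a.m \mid m+n \mid x$ over a nonempty action set $\mathit{Act}$ and variables $x$, verdicts $v::=\mathit{end}\mid\mathit{yes}\mid\mathit{no}$; a closed substitution maps each variable to a variable-free monitor. Semantics: $\xrightarrow{\alpha}$ ($\alpha\in\mathit{Act}\cup\{\tau\}$) is the least relation with $a.m\xrightarrow{a}m$; $m\xrightarrow{\alpha}m'$ implies $m+n\xrightarrow{\alpha}m'$ and $n+m\xrightarrow{\alpha}m'$; $v\xrightarrow{\alpha}v$ for verdicts $v$. Weak transitions: $m\xRightarrow{\varepsilon}m'$ iff $m(\xrightarrow{\tau})^*m'$; $m\xRightarrow{a}m'$ iff $m\xRightarrow{\varepsilon}\xrightarrow{a}\xRightarrow{\varepsilon}m'$; $m\xRightarrow{as'}m'$ ($s'\ne\varepsilon$) iff $m\xRightarrow{a}m_1\xRightarrow{s'}m'$. For closed $m$, $L_a(m)=\{s\in\mathit{Act}^*\mid m\xRightarrow{s}\mathit{yes}\}$, $L_r(m)=\{s\in\mathit{Act}^*\mid m\xRightarrow{s}\mathit{no}\}$; closed $m\simeq_\omega n$ iff $L_a(m)\cdot\mathit{Act}^\omega=L_a(n)\cdot\mathit{Act}^\omega$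 and $L_r(m)\cdot\mathit{Act}^\omega=L_r(n)\cdot\mathit{Act}^\omega$ ($\mathit{Act}^\omega$: infinite sequences over $\mathit{Act}$); for open terms $m\simeq_\omega n$ iff $\sigma(m)\simeq_\omega\sigma(n)$ for every closed substitution $\sigma$. *)

From Stdlib Require Import List Relations.
Import ListNotations.
Set Implicit Arguments.

Section Monitors.
Variable Act : Type.
Variable V : Type.

Inductive verdict : Type := vend | vyes | vno.

Inductive monitor : Type :=
| mverd : verdict -> monitor
| mpre  : Act -> monitor -> monitor
| msum  : monitor -> monitor -> monitor
| mvar  : V -> monitor.

Fixpoint closed (m : monitor) : Prop :=
  match m with
  | mverd _ => True
  | mpre _ m => closed m
  | msum m n => closed m /\ closed n
  | mvar _ => False
  end.

Fixpoint subst (s : V -> monitor) (m : monitor) : monitor :=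
  match m with
  | mverd v => mverd v
  | mpre a m => mpre a (subst s m)
  | msum m n => msum (subst s m) (subst s n)
  | mvar x => s x
  end.

Definition closed_subst (s : V -> monitor) : Prop := forall x, closed (s x).

(* labels: Some a = action a, None = tau *)
Inductive step : monitor -> option Act -> monitor -> Prop :=
| st_pre  : forall a m, step (mpre a m) (Some a) m
| st_suml : forall m n al m', step m al m' -> step (msum m n) al m'
| st_sumr : forall m n al m', step m al m' -> step (msum n m) al m'
| st_verd : forall v al, step (mverd v) al (mverd v).

Definition tau_star : relation monitor :=
  clos_refl_trans monitor (fun m m' => step m None m').

Definition weak_act (a : Act) (m m' : monitor) : Prop :=
  exists m1 m2, tau_star m m1 /\ step m1 (Some a) m2 /\ tau_star m2 m'.

Fixpoint weak (s : list Act) (m m' : monitor) : Prop :=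
  match s with
  | [] => tau_star m m'
  | [a] => weak_act a m m'
  | a :: s' => exists m1, weak_act a m m1 /\ weak s' m1 m'
  end.

Definition La (m : monitor) (s : list Act) : Prop := weak s m (mverd vyes).
Definition Lr (m : monitor) (s : list Act) : Prop := weak s m (mverd vno).

(* L . Act^omega, infinite sequences as nat -> Act *)
Definition is_prefix (s : list Act) (w : nat -> Act) : Prop :=
  forall i, i < length s -> nth_error s i = Some (w i).

Definition omega_ext (L : list Act -> Prop) (w : nat -> Act) : Prop :=
  exists s, L s /\ is_prefix s w.

Definition same_omega (L1 L2 : list Act -> Prop) : Prop :=
  forall w, omega_ext L1 w <-> omega_ext L2 w.

Definition omega_equiv_closed (m n : monitor) : Prop :=
  same_omega (La m) (La n) /\ same_omega (Lr m) (Lr n).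

Definition omega_equiv (m n : monitor) : Prop :=
  forall s, closed_subst s -> omega_equiv_closed (subst s m) (subst s n).

Definition finite_set (S : list Act -> Prop) : Prop :=
  exists l : list (list Act), forall s, S s -> In s l.

Definition diff_set (m n : monitor) (s : list Act) : Prop :=
  (La m s /\ ~ La n s) \/ (Lr m s /\ ~ Lr n s) \/
  (La n s /\ ~ La m s) \/ (Lr n s /\ ~ Lr m s).

End Monitors.

From Stdlib Require Import List Relations Lia Classical.
Import ListNotations.
Set Implicit Arguments.

(* For a variable-free monitor [m] and a verdict [v], the
   language [L_v(m) = { s | m ==s==> v }] is FINITELY GENERATED: it equals
   [G · Act*] for the finite list [G = verdict_words v m] of words spelled
   along the syntax of [m] down to an occurrence of [v] (verdicts are
   irrevocable, and a sum only ever commits to one of its summands).  In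
   fact this holds for open monitors too, variables contributing nothing.

   The theorem then reduces to a fact about finitely generated languages:
   [L1 · Act^ω = L2 · Act^ω] iff the symmetric difference of [L1] and [L2]
   is finite.  If the ω-extensions agree, every [w ∈ L1 \ L2] is a prefix of
   a generator of [L2] (extend [w] to an infinite word, which then has a
   prefix in [L2]); conversely, if [L1 \ L2] is finite, an infinite word
   with a prefix in [L1] has a prefix in [L1] longer than every word of
   [L1 \ L2], hence lying in [L2]. *)

Section Languages.
Variable A : Type.

Definition generated (L : list A -> Prop) (G : list (list A)) : Prop :=
  forall s, L s <-> exists f t, In f G /\ s = f ++ t.

Lemma generated_ext_closed L G s t : generated L G -> L s -> L (s ++ t).
Proof.
  intros HG Hs. apply HG in Hs as (f & t' & Hf & ->).
  apply HG. exists f, (t' ++ t). split; auto. symmetry. apply app_assoc.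
Qed.

Definition symdiff (L1 L2 : list A -> Prop) (s : list A) : Prop :=
  (L1 s /\ ~ L2 s) \/ (L2 s /\ ~ L1 s).

Lemma finite_mono (S1 S2 : list A -> Prop) :
  (forall s, S1 s -> S2 s) -> finite_set S2 -> finite_set S1.
Proof. intros Hsub (l & Hl). exists l. auto. Qed.

Lemma finite_union (S1 S2 : list A -> Prop) :
  finite_set S1 -> finite_set S2 -> finite_set (fun s => S1 s \/ S2 s).
Proof.
  intros (l1 & H1) (l2 & H2). exists (l1 ++ l2).
  intros s [Hs|Hs]; apply in_or_app; auto.
Qed.

Lemma finite_set_bounded (P : list A -> Prop) :
  finite_set P -> exists N, forall s, P s -> length s < N.
Proof.
  intros (l & Hl). set (lens := map (@length A) l).
  pose proof (proj1 (list_max_le lens _) (le_n _)) as Hmax.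
  rewrite Forall_forall in Hmax.
  exists (S (list_max lens)). intros s Hs.
  enough (length s <= list_max lens) by lia.
  apply Hmax, in_map, Hl, Hs.
Qed.

Fixpoint prefixes (f : list A) : list (list A) :=
  match f with
  | [] => [[]]
  | a :: f => [] :: map (cons a) (prefixes f)
  end.

Lemma prefixes_complete s t : In s (prefixes (s ++ t)).
Proof.
  induction s as [|a s IH]; simpl.
  - destruct t; simpl; auto.
  - right. apply in_map, IH.
Qed.

Lemma is_prefix_cons a s (u : nat -> A) :
  is_prefix (a :: s) u -> u 0 = a /\ is_prefix s (fun i => u (S i)).
Proof.
  intro H. split.
  - specialize (H 0 ltac:(simpl; lia)). simpl in H. congruence.
  - intros i Hi. apply (H (S i)). simpl; lia.
Qed.

Lemma is_prefix_app f t (u : nat -> A) : is_prefix (f ++ t) u -> is_prefix f u.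
Proof.
  intros H i Hi. rewrite <- (H i) by (rewrite length_app; lia).
  rewrite nth_error_app1; auto.
Qed.

Lemma is_prefix_comparable s w (u : nat -> A) :
  is_prefix s u -> is_prefix w u -> length s <= length w -> exists t, w = s ++ t.
Proof.
  revert w u; induction s as [|a s IH]; intros w u Hs Hw Hlen.
  - exists w; auto.
  - destruct w as [|b w]; simpl in Hlen; [lia|].
    apply is_prefix_cons in Hs as [Ea Hs]. apply is_prefix_cons in Hw as [Eb Hw].
    destruct (IH w _ Hs Hw ltac:(lia)) as (t & ->). exists t. simpl; congruence.
Qed.

Lemma is_prefix_of_length (u : nat -> A) K :
  exists p, is_prefix p u /\ length p = K.
Proof.
  exists (map u (seq 0 K)). rewrite length_map, length_seq. split; auto.
  intros i Hi. rewrite length_map, length_seq in Hi.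
  rewrite nth_error_map, nth_error_seq.
  destruct (PeanoNat.Nat.ltb_spec i K); [reflexivity|lia].
Qed.

(* If every ω-word with a prefix in [L1] has one in the generated language
   [L2], then [L1 \ L2] consists of prefixes of generators of [L2]; this
   needs [A] inhabited to extend a finite word to an infinite one. *)
Lemma omega_incl_diff_finite (a0 : A) (L1 L2 : list A -> Prop) G :
  (forall u, omega_ext L1 u -> omega_ext L2 u) -> generated L2 G ->
  finite_set (fun s => L1 s /\ ~ L2 s).
Proof.
  intros Hincl HG. exists (flat_map prefixes G). intros w (H1 & H2).
  set (u := fun i => nth i w a0).
  assert (Pw : is_prefix w u) by (intros i Hi; apply nth_error_nth'; auto).
  destruct (Hincl u) as (s & Hs & Ps); [exists w; auto|].
  apply HG in Hs as (f & t & Hf & ->). apply is_prefix_app in Ps.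
  apply in_flat_map. exists f. split; auto.
  destruct (PeanoNat.Nat.le_gt_cases (length f) (length w)) as [Hle|Hgt].
  - destruct (is_prefix_comparable Ps Pw Hle) as (t' & ->).
    exfalso. apply H2, HG. exists f, t'. auto.
  - destruct (is_prefix_comparable Pw Ps ltac:(lia)) as (t' & ->).
    apply prefixes_complete.
Qed.

Lemma finite_diff_omega_incl (L1 L2 : list A -> Prop) G :
  generated L1 G -> finite_set (fun s => L1 s /\ ~ L2 s) ->
  forall u, omega_ext L1 u -> omega_ext L2 u.
Proof.
  intros HG Hfin u (s & Hs & Ps).
  destruct (finite_set_bounded Hfin) as (N & HN).
  destruct (is_prefix_of_length u (length s + N)) as (p & Pp & Lp).
  destruct (is_prefix_comparable Ps Pp ltac:(lia)) as (t & Ep).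
  assert (H1 : L1 p) by (rewrite Ep; apply generated_ext_closed with G; auto).
  destruct (classic (L2 p)) as [H2|H2].
  - exists p; auto.
  - specialize (HN p (conj H1 H2)). lia.
Qed.

Lemma same_omega_iff_symdiff_finite (a0 : A) (L1 L2 : list A -> Prop) G1 G2 :
  generated L1 G1 -> generated L2 G2 ->
  same_omega L1 L2 <-> finite_set (symdiff L1 L2).
Proof.
  intros HG1 HG2. split.
  - intro Heq. apply finite_union.
    + apply (omega_incl_diff_finite a0) with G2; auto. intro u; apply Heq.
    + apply (omega_incl_diff_finite a0) with G1; auto. intro u; apply Heq.
  - intros Hfin u. split; [apply finite_diff_omega_incl with G1|
                             apply finite_diff_omega_incl with G2]; auto;
      apply finite_mono with (symdiff L1 L2); auto; unfold symdiff; tauto.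
Qed.

End Languages.

Section Traces.
Variables Act V : Type.
Local Notation mon := (monitor Act V).
Local Notation Verd v := (mverd Act V v).
Local Notation tau_star := (@tau_star Act V).

(* Weak traces, uniformly right-recursive: each action is preceded by
   internal moves; trailing internal moves are absorbed by the tail. *)
Fixpoint trace (s : list Act) (m m' : mon) : Prop :=
  match s with
  | [] => tau_star m m'
  | a :: s => exists m1 m2, tau_star m m1 /\ step m1 (Some a) m2 /\ trace s m2 m'
  end.

Lemma trace_head s x y z : tau_star x y -> trace s y z -> trace s x z.
Proof.
  destruct s as [|a s]; simpl.
  - intros; eapply rt_trans; eauto.
  - intros Hxy (m1 & m2 & H1 & H2 & H3). exists m1, m2.
    repeat split; auto. eapply rt_trans; eauto.
Qed.

Lemma weak_iff_trace s m m' : weak s m m' <-> trace s m m'.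
Proof.
  revert m. induction s as [|a [|b s] IH]; intro m; [reflexivity|..].
  - simpl. reflexivity.
  - change (weak (a :: b :: s) m m')
      with (exists m1, weak_act a m m1 /\ weak (b :: s) m1 m').
    split.
    + intros (m1 & (k1 & k2 & H1 & H2 & H3) & Hrest).
      exists k1, k2. repeat split; auto. apply trace_head with m1; auto.
      apply IH; auto.
    + intros (k1 & k2 & H1 & H2 & Hrest). exists k2. split.
      * exists k1, k2. repeat split; auto. apply rt_refl.
      * apply IH; auto.
Qed.

Lemma tau_star_verd u y : tau_star (Verd u) y -> y = Verd u.
Proof.
  intro H. apply clos_rt_rt1n in H. remember (Verd u) as x.
  induction H as [|x z y Hs _ IH]; auto. subst. inversion Hs; subst; auto.
Qed.

Lemma trace_verd s v : trace s (Verd v) (Verd v).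
Proof.
  induction s as [|a s IH]; simpl; [apply rt_refl|].
  exists (Verd v), (Verd v). repeat split; auto. apply rt_refl. constructor.
Qed.

Lemma trace_verd_inv s u v : trace s (Verd u) (Verd v) -> u = v.
Proof.
  induction s as [|a s IH]; simpl.
  - intro H. apply tau_star_verd in H. congruence.
  - intros (m1 & m2 & H1 & H2 & H3). apply tau_star_verd in H1. subst.
    inversion H2; subst. auto.
Qed.

Lemma trace_verd_app s t m v : trace s m (Verd v) -> trace (s ++ t) m (Verd v).
Proof.
  revert m. induction s as [|a s IH]; simpl; intros m H.
  - apply trace_head with (Verd v); auto. apply trace_verd.
  - destruct H as (m1 & m2 & H1 & H2 & H3). exists m1, m2. auto.
Qed.

Lemma tau_star_inert x y : (forall z, ~ step x None z) -> tau_star x y -> y = x.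
Proof.
  intros Hn H. apply clos_rt_rt1n in H. destruct H as [|z ? Hs]; auto.
  exfalso. eapply Hn; eauto.
Qed.

Lemma tau_star_sum m n x :
  tau_star (msum m n) x -> x = msum m n \/ tau_star m x \/ tau_star n x.
Proof.
  intro H. apply clos_rt_rt1n in H. destruct H as [|z y Hs Hrest]; auto.
  apply clos_rt1n_rt in Hrest.
  inversion Hs; subst; right; [left|right];
    eapply rt_trans; eauto; apply rt_step; auto.
Qed.

(* If [k'] can do every step of [k], then it can start every verdict trace
   of [k]; used with [k'] a sum and [k] one of its summands. *)
Lemma trace_simulate k k' s v :
  (forall al z, step k al z -> step k' al z) ->
  trace s k (Verd v) -> trace s k' (Verd v).
Proof.
  intro Hsim.
  assert (Hfirst : forall x al y, tau_star k x -> step x al y ->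
            exists x', tau_star k' x' /\ step x' al y).
  { intros x al y Hx Hs. apply clos_rt_rt1n in Hx.
    destruct Hx as [|z w Hkz Hzw].
    - exists k'. split; [apply rt_refl | auto].
    - exists w. split; auto. apply clos_rt1n_rt in Hzw.
      eapply rt_trans; [apply rt_step, Hsim, Hkz | exact Hzw]. }
  destruct s as [|a s]; simpl.
  - intro H. destruct (Hfirst _ _ _ H (st_verd V v None)) as (x' & H1 & H2).
    eapply rt_trans; eauto. apply rt_step; auto.
  - intros (m1 & m2 & H1 & H2 & H3).
    destruct (Hfirst _ _ _ H1 H2) as (x' & G1 & G2). exists x', m2. auto.
Qed.

Lemma trace_sum_inv s m n v :
  trace s (msum m n) (Verd v) -> trace s m (Verd v) \/ trace s n (Verd v).
Proof.
  destruct s as [|a s]; simpl.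
  - intro H. apply tau_star_sum in H as [E|[E|E]]; [discriminate|auto|auto].
  - intros (m1 & m2 & H1 & H2 & H3).
    apply tau_star_sum in H1 as [E|[E|E]].
    + subst. inversion H2; subst; [left; exists m, m2 | right; exists n, m2];
        repeat split; auto; apply rt_refl.
    + left. exists m1, m2. auto.
    + right. exists m1, m2. auto.
Qed.

Lemma trace_pre_inv s a m v :
  trace s (mpre a m) (Verd v) -> exists s', s = a :: s' /\ trace s' m (Verd v).
Proof.
  assert (Hinert : forall z, ~ step (mpre a m) None z) by (intros z Hz; inversion Hz).
  destruct s as [|b s]; simpl.
  - intro H. apply tau_star_inert in H; [discriminate | auto].
  - intros (m1 & m2 & H1 & H2 & H3). apply tau_star_inert in H1; auto. subst.
    inversion H2; subst. exists s. auto.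
Qed.

Lemma trace_var_inv s x v : ~ trace s (mvar Act x) (Verd v).
Proof.
  assert (Hinert : forall al z, ~ step (mvar Act x) al z) by (intros al z Hz; inversion Hz).
  destruct s as [|b s]; simpl.
  - intro H. apply tau_star_inert in H; [discriminate | intro z; apply Hinert].
  - intros (m1 & m2 & H1 & H2 & _). apply tau_star_inert in H1; [|intro z; apply Hinert].
    subst. eapply Hinert; eauto.
Qed.

Definition verdict_eq_dec (u v : verdict) : {u = v} + {u <> v}.
Proof. decide equality. Defined.

(* The generators of the verdict language [L_v(m)]: the words spelled by
   the prefixes on a syntactic path from the root of [m] to the verdict [v]. *)
Fixpoint verdict_words (v : verdict) (m : mon) : list (list Act) :=
  match m with
  | mverd _ _ u => if verdict_eq_dec u v then [[]] else []
  | mpre a m => map (cons a) (verdict_words v m)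
  | msum m n => verdict_words v m ++ verdict_words v n
  | mvar _ _ => []
  end.

Lemma verdict_words_sound v m f : In f (verdict_words v m) -> trace f m (Verd v).
Proof.
  revert f. induction m as [u|a m IH|m IHm n IHn|x]; intros f Hf; simpl in Hf.
  - destruct (verdict_eq_dec u v) as [->|]; [|contradiction].
    destruct Hf as [<-|[]]. apply rt_refl.
  - apply in_map_iff in Hf as (f' & <- & Hf'). exists (mpre a m), m.
    repeat split; auto. apply rt_refl. constructor.
  - apply in_app_or in Hf as [Hf|Hf].
    + apply trace_simulate with m; auto. intros; apply st_suml; auto.
    + apply trace_simulate with n; auto. intros; apply st_sumr; auto.
  - contradiction.
Qed.

Lemma verdict_words_complete v m s :
  trace s m (Verd v) -> exists f t, In f (verdict_words v m) /\ s = f ++ t.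
Proof.
  revert s. induction m as [u|a m IH|m IHm n IHn|x]; intros s Hs; simpl.
  - apply trace_verd_inv in Hs. subst. exists [], s.
    destruct (verdict_eq_dec v v) as [_|]; [simpl; auto | contradiction].
  - apply trace_pre_inv in Hs as (s' & -> & Hs').
    destruct (IH s' Hs') as (f & t & Hf & ->).
    exists (a :: f), t. split; auto. apply in_map; auto.
  - apply trace_sum_inv in Hs as [H|H];
      [destruct (IHm s H) as (f & t & Hf & ->) | destruct (IHn s H) as (f & t & Hf & ->)];
      exists f, t; split; auto; apply in_or_app; auto.
  - exfalso. eapply trace_var_inv; eauto.
Qed.

Lemma verdict_language_generated v m :
  generated (fun s => weak s m (Verd v)) (verdict_words v m).
Proof.
  intro s. rewrite weak_iff_trace. split.
  - apply verdict_words_complete.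
  - intros (f & t & Hf & ->). apply trace_verd_app, verdict_words_sound, Hf.
Qed.

Lemma diff_set_finite_iff (M N : mon) :
  finite_set (diff_set M N) <->
  finite_set (symdiff (La M) (La N)) /\ finite_set (symdiff (Lr M) (Lr N)).
Proof.
  split.
  - intro H. split; apply finite_mono with (diff_set M N); auto;
      unfold diff_set, symdiff; tauto.
  - intros [Ha Hr]. eapply finite_mono; [|exact (finite_union Ha Hr)].
    unfold diff_set, symdiff; tauto.
Qed.

Lemma omega_equiv_closed_iff_finite (a0 : Act) (M N : mon) :
  omega_equiv_closed M N <->
  finite_set (symdiff (La M) (La N)) /\ finite_set (symdiff (Lr M) (Lr N)).
Proof.
  pose proof (same_omega_iff_symdiff_finite a0 (verdict_language_generated vyes M)
                (verdict_language_generated vyes N)) as Hyes.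
  pose proof (same_omega_iff_symdiff_finite a0 (verdict_language_generated vno M)
                (verdict_language_generated vno N)) as Hno.
  split; intros [H1 H2]; split;
    [apply Hyes | apply Hno | apply Hyes | apply Hno]; assumption.
Qed.

End Traces.

Theorem mainTheorem18 (Act V : Type) (a0 : Act) (m n : monitor Act V) :
  omega_equiv m n <->
  (forall s : V -> monitor Act V, closed_subst s ->
     finite_set (diff_set (subst s m) (subst s n))).
Proof.
  unfold omega_equiv. split; intros H sg Hsg; specialize (H sg Hsg).
  - apply diff_set_finite_iff, omega_equiv_closed_iff_finite; auto.
  - apply (omega_equiv_closed_iff_finite a0), diff_set_finite_iff, H.
Qed.
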